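(* There exist a positive integer $N$ and a doubly-stochastic $N\times N$ matrix $A$ such that $$\mathrm{per}(A)\ <\ SD(A):=\prod_{1\le j\le N}\ \sum_{1\le i\le N}A(i,j)\prod_{m\ne i}\bigl(1-A(m,j)\bigr).$$
   Context: A doubly-stochastic matrix is an entrywise non-negative square matrix all of whose row and column sums equal $1$; $\mathrm{per}$ is the permanent. *)

From HB Require Import structures.
From mathcomp Require Import all_boot all_order all_algebra all_fingroup.
From Stdlib Require Rdefinitions.
From mathcomp Require Import Rstruct.
Set Implicit Arguments. Unset Strict Implicit. Unset Printing Implicit Defensive.
Import Order.TTheory GRing.Theory Num.Theory.
Local Open Scope ring_scope.

Definition permanent (R : comRingType) (n : nat) (A : 'M[R]_n) : R :=
  \sum_(s : 'S_n) \prod_(i < n) A i (s i).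

Definition doubly_stochastic (R : numDomainType) (n : nat) (A : 'M[R]_n) : Prop :=
  (forall i j, 0 <= A i j) /\
  (forall i, \sum_(j < n) A i j = 1) /\
  (forall j, \sum_(i < n) A i j = 1).

Definition SD (R : comRingType) (n : nat) (A : 'M[R]_n) : R :=
  \prod_(j < n) \sum_(i < n) (A i j * \prod_(m < n | m != i) (1 - A m j)).

From HB Require Import structures.
From mathcomp Require Import all_boot all_order all_algebra all_fingroup.
From Stdlib Require Rdefinitions.
From mathcomp Require Import Rstruct.
From mathcomp Require Import lra.
Set Implicit Arguments. Unset Strict Implicit. Unset Printing Implicit Defensive.
Import Order.TTheory GRing.Theory Num.Theory.
Local Open Scope ring_scope.

(* The counterexample is the (n+1) x (n+1) arrow matrix with zero corner, [a]
   on the rest of the first row and column and [b] on the rest of the diagonal.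
   A permutation contributes to its permanent only if it is a transposition
   (0 j), so per = n a^2 b^(n-1); in the SD product every column j <> 0 has
   exactly two nonzero entries, giving SD = n a (1-a)^(n-1) (a(1-b) + b(1-a))^n.
   For n = 8, a = 1/8, b = 7/8 this is per = (7/8)^7 / 8 < (7/8)^7 (25/32)^8. *)

Lemma card_neq2 (n : nat) (i j : 'I_n.+1) :
  i != j -> #|[pred m | (m != i) && (m != j)]| = n.-1.
Proof.
move=> ij; have := cardD1 j (predC1 i).
rewrite cardC1 card_ord !inE eq_sym ij add1n /= => /(congr1 predn) /= ->.
by apply: eq_card => m; rewrite !inE andbC.
Qed.

Section ArrowMatrix.
Variables (R : comNzRingType) (n : nat) (a b : R).

Local Notation o := (@ord0 n).

Definition arrow_mx : 'M[R]_n.+1 :=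
  \matrix_(i, j) if i == o then (if j == o then 0 else a)
                 else if j == o then a else if i == j then b else 0.

Lemma arrow_mx00 : arrow_mx o o = 0.
Proof. by rewrite mxE eqxx. Qed.

Lemma arrow_mx0j j : j != o -> arrow_mx o j = a.
Proof. by move=> /negbTE jo; rewrite mxE eqxx jo. Qed.

Lemma arrow_mxi0 i : i != o -> arrow_mx i o = a.
Proof. by move=> /negbTE io; rewrite mxE io eqxx. Qed.

Lemma arrow_mxii i : i != o -> arrow_mx i i = b.
Proof. by move=> /negbTE io; rewrite mxE io !eqxx. Qed.

Lemma arrow_mx_offdiag i j : i != o -> j != o -> i != j -> arrow_mx i j = 0.
Proof. by move=> /negbTE io /negbTE jo /negbTE ij; rewrite mxE io jo ij. Qed.

Lemma arrow_mx_support {i j} : arrow_mx i j != 0 ->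
  if i == o then j != o else (j == o) || (j == i).
Proof.
case: (eqVneq i o) => [->|io]; case: (eqVneq j o) => [->|jo] //=.
  by rewrite arrow_mx00 eqxx.
case: (eqVneq j i) => // ji /eqP[].
by apply: arrow_mx_offdiag; rewrite // eq_sym.
Qed.

Lemma arrow_mx_prod_eq0 (s : 'S_n.+1) :
  (s o == o) || (s != tperm o (s o)) -> \prod_i arrow_mx i (s i) = 0.
Proof.
move=> degenerate.
have [/forallP nz | ] := boolP [forall i, arrow_mx i (s i) != 0]; last first.
  by rewrite negb_forall => /existsP[i /negPn/eqP zi]; rewrite (bigD1 i) //= zi mul0r.
(* All factors nonzero forces s o = j <> 0, then s j = 0 and s i = i elsewhere. *)
have so : s o != o by have := arrow_mx_support (nz o); rewrite eqxx.
have ss : s (s o) = o.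
  have := arrow_mx_support (nz (s o)); rewrite (negbTE so) => /orP[/eqP // | /eqP sso].
  by have := perm_inj sso; move/eqP: so.
suff s_tperm : s = tperm o (s o) by rewrite (negbTE so) -s_tperm eqxx in degenerate.
apply/permP => i; case: tpermP => [-> | -> | /eqP io /eqP isj] //.
have := arrow_mx_support (nz i); rewrite (negbTE io) => /orP[/eqP sio | /eqP //].
by rewrite -ss in sio; move/perm_inj: sio => sio; rewrite sio eqxx in isj.
Qed.

Lemma arrow_mx_prod_tperm j :
  j != o -> \prod_i arrow_mx i (tperm o j i) = a * a * b ^+ n.-1.
Proof.
move=> jo; rewrite (bigD1 o) //= tpermL arrow_mx0j // (bigD1 j) //= tpermR.
rewrite arrow_mxi0 // -mulrA (eq_bigr (fun=> b)) ?prodr_const ?card_neq2 1?eq_sym //.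
by move=> i /andP[io ij]; rewrite tpermD 1?eq_sym // arrow_mxii.
Qed.

Lemma permanent_arrow_mx : permanent arrow_mx = (a * a * b ^+ n.-1) *+ n.
Proof.
rewrite /permanent (partition_big (fun s : 'S_n.+1 => s o) predT) //=.
rewrite (bigD1 o) //= big1 ?add0r => [|s so]; last by rewrite arrow_mx_prod_eq0 ?so.
rewrite (eq_bigr (fun=> a * a * b ^+ n.-1)) ?sumr_const ?cardC1 ?card_ord //.
move=> j jo; rewrite (bigD1 (tperm o j)) /= ?tpermL // arrow_mx_prod_tperm //.
rewrite big1 ?addr0 // => s /andP[/eqP so s_ne]; apply: arrow_mx_prod_eq0.
by rewrite so s_ne orbT.
Qed.

Lemma SD_col0_arrow_mx :
  \sum_i (arrow_mx i o * \prod_(m | m != i) (1 - arrow_mx m o)) = a *+ n * (1 - a) ^+ n.-1.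
Proof.
rewrite (bigD1 o) //= arrow_mx00 mul0r add0r.
rewrite (eq_bigr (fun=> a * (1 - a) ^+ n.-1)) ?sumr_const ?cardC1 ?card_ord ?mulrnAl //.
move=> i io; rewrite arrow_mxi0 //; congr (_ * _).
rewrite (bigD1 o) 1?eq_sym //= arrow_mx00 subr0 mul1r.
rewrite (eq_bigr (fun=> 1 - a)) ?prodr_const ?card_neq2 //.
by move=> m /andP[_ mo]; rewrite arrow_mxi0.
Qed.

Lemma SD_colj_arrow_mx j : j != o ->
  \sum_i (arrow_mx i j * \prod_(m | m != i) (1 - arrow_mx m j)) =
  a * (1 - b) + b * (1 - a).
Proof.
move=> jo; have off_col m : m != o -> m != j -> 1 - arrow_mx m j = 1.
  by move=> mo mj; rewrite arrow_mx_offdiag ?subr0.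
rewrite (bigD1 o) //= arrow_mx0j // (bigD1 j) //= arrow_mxii //.
rewrite big1 ?mulr1 => [|m /andP[mo mj]]; last exact: off_col.
rewrite [X in _ + X](bigD1 j) //= arrow_mxii // [X in _ + (_ + X)]big1 ?addr0.
  rewrite (bigD1 o) 1?eq_sym //= arrow_mx0j // big1 ?mulr1 // => m /andP[mj mo].
  exact: off_col.
by move=> i /andP[io ij]; rewrite arrow_mx_offdiag ?mul0r.
Qed.

Lemma tr_arrow_mx : arrow_mx^T = arrow_mx.
Proof.
apply/matrixP => i j; rewrite !mxE [j == i]eq_sym.
by case: (j == o); case: (i == o).
Qed.

Lemma sum_arrow_mx_row0 : \sum_j arrow_mx o j = a *+ n.
Proof.
rewrite (bigD1 o) //= arrow_mx00 add0r (eq_bigr (fun=> a)) => [|j /arrow_mx0j //].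
by rewrite sumr_const cardC1 card_ord.
Qed.

Lemma sum_arrow_mx_row i : i != o -> \sum_j arrow_mx i j = a + b.
Proof.
move=> io; rewrite (bigD1 o) //= arrow_mxi0 // (bigD1 i) //= arrow_mxii //.
by rewrite big1 ?addr0 // => j /andP[jo ji]; rewrite arrow_mx_offdiag // eq_sym.
Qed.

Lemma SD_arrow_mx :
  SD arrow_mx = a *+ n * (1 - a) ^+ n.-1 * (a * (1 - b) + b * (1 - a)) ^+ n.
Proof.
rewrite /SD (bigD1 o) //= SD_col0_arrow_mx; congr (_ * _).
rewrite (eq_bigr (fun=> a * (1 - b) + b * (1 - a))) ?prodr_const ?cardC1 ?card_ord //.
exact: SD_colj_arrow_mx.
Qed.

End ArrowMatrix.

Lemma arrow_mx_doubly_stochastic (R : numDomainType) (n : nat) (a b : R) :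
  0 <= a -> 0 <= b -> a *+ n = 1 -> a + b = 1 -> doubly_stochastic (arrow_mx n a b).
Proof.
move=> a_ge0 b_ge0 na1 ab1.
have row_sum i : \sum_j arrow_mx n a b i j = 1.
  have [-> | io] := eqVneq i ord0; first by rewrite sum_arrow_mx_row0.
  by rewrite sum_arrow_mx_row.
split; [move=> i j | split => // j].
  by rewrite mxE; case: ifP; case: ifP => //; case: ifP.
rewrite -(row_sum j); apply: eq_bigr => i _.
by rewrite -{1}tr_arrow_mx mxE.
Qed.

Theorem mainTheorem16 :
  exists (N : nat) (A : 'M[Rdefinitions.R]_N),
    (0 < N)%N /\ doubly_stochastic A /\ permanent A < SD A.
Proof.
pose a : Rdefinitions.R := 8^-1; pose b : Rdefinitions.R := 7 / 8.
exists 9%N, (arrow_mx 8 a b); split => //; split.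
  by apply: arrow_mx_doubly_stochastic; rewrite /a /b; lra.
by rewrite permanent_arrow_mx SD_arrow_mx /a /b; lra.
Qed.
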